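(* Let $n,m_1,m_2$ be positive integers with $m_2 \geq n \geq \lceil \log m_1 \rceil+\lceil \log m_2 \rceil+1$. Then $R(C_{n},K_{m_1,m_2})\leq 33m_1+49m_2$.
   Context: $C_n$ is the cycle on $n$ vertices and $K_{a,b}$ the complete bipartite graph with parts of sizes $a$ and $b$. $R(G_1,G_2)$ is the smallest $N$ such that every red/blue coloring of the edges of $K_N$ contains a red copy of $G_1$ or a blue copy of $G_2$. $\log$ denotes the logarithm to base $2$. *)

From mathcomp Require Import all_boot.
Set Implicit Arguments. Unset Strict Implicit. Unset Printing Implicit Defensive.

(* A red/blue colouring of the edges of K_N: vertex set 'I_N, a symmetric
   relation c; the edge {x,y} (x != y) is red iff c x y, blue iff ~~ c x y. *)
Definition symmetric_colouring (N : nat) (c : 'I_N -> 'I_N -> bool) : Prop :=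
  forall x y, c x y = c y x.

Definition red_edge N (c : 'I_N -> 'I_N -> bool) (x y : 'I_N) : bool :=
  (x != y) && c x y.
Definition blue_edge N (c : 'I_N -> 'I_N -> bool) (x y : 'I_N) : bool :=
  (x != y) && ~~ c x y.

Definition has_red_cycle N (c : 'I_N -> 'I_N -> bool) (n : nat) : Prop :=
  exists v : 'I_n -> 'I_N, injective v /\
    forall i : 'I_n, red_edge c (v i) (v (ordS i)).

Definition has_blue_Kab N (c : 'I_N -> 'I_N -> bool) (a b : nat) : Prop :=
  exists A B : {set 'I_N}, [/\ #|A| = a, #|B| = b, [disjoint A & B] &
    forall x y, x \in A -> y \in B -> blue_edge c x y].

Definition ramsey_Cn_Kab (n a b N : nat) : Prop :=
  forall c : 'I_N -> 'I_N -> bool, symmetric_colouring c ->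
    has_red_cycle c n \/ has_blue_Kab c a b.

Definition ramsey_le (n a b M : nat) : Prop :=
  exists2 N, N <= M & ramsey_Cn_Kab n a b N.

Definition clog2 (m : nat) : nat := up_log 2 m.

(* Without a blue K_{a,b}, the red graph has an edge between any disjoint
   a-set and b-set.  Such a graph contains disjoint sets E_A, E_B in which
   every set X of fewer than a (resp. b) vertices has 4|X| neighbours, and a
   large set W of vertices with at least two neighbours in each of them.  A
   depth-first search in W yields a red path on n - log a - log b vertices
   (logarithms rounded up).  From its two ends, expansion grows binary trees
   into E_A and E_B whose layers at depth log a and log b have a and b
   vertices; a red edge between these two layers closes a cycle of length
   exactly n. *)

From mathcomp Require Import all_boot zify.
From Stdlib Require Import Classical.
Set Implicit Arguments. Unset Strict Implicit. Unset Printing Implicit Defensive.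

Section Joined.

Variables (T : finType) (e : rel T).

Definition joined (k k' : nat) : Prop :=
  forall X Y : {set T}, [disjoint X & Y] -> k <= #|X| -> k' <= #|Y| ->
    exists x y, [/\ x \in X, y \in Y & e x y].

Definition nbhd (E X : {set T}) : {set T} :=
  [set v in E | (v \notin X) && [exists x in X, e x v]].

Definition expanding (E : {set T}) (k : nat) : Prop :=
  forall X : {set T}, X \subset E -> 0 < #|X| < k -> 4 * #|X| <= #|nbhd E X|.

Lemma subset_of_card (A : {set T}) k :
  k <= #|A| -> exists2 B : {set T}, B \subset A & #|B| = k.
Proof.
case/card_geqP=> s [uniq_s <- sA].
exists [set x in s]; last by rewrite cardsE (card_uniqP uniq_s).
by apply/subsetP=> x; rewrite inE; apply: sA.
Qed.

Lemma disjoint_setU1 (A B : {set T}) x :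
  x \notin B -> [disjoint A & B] -> [disjoint x |: A & B].
Proof.
move=> xB dAB.
by rewrite -setI_eq0 setIUl (disjoint_setI0 dAB) setU0 setI_eq0 disjoints1.
Qed.

Lemma joined_sym k k' : symmetric e -> joined k k' -> joined k' k.
Proof.
move=> e_sym jn X Y dXY kX kY.
have [|y [x [yY xX eyx]]] := jn Y X _ kY kX; first by rewrite disjoint_sym.
by exists x, y; rewrite e_sym.
Qed.

Lemma joined_nonadjacent k k' (X Y : {set T}) :
  joined k k' -> [disjoint X & Y] -> k <= #|X| ->
  (forall x y, x \in X -> y \in Y -> ~~ e x y) -> #|Y| < k'.
Proof.
move=> jn dXY kX noE; rewrite ltnNge; apply/negP=> kY.
have [x [y [xX yY exy]]] := jn X Y dXY kX kY.
by move: (noE x y xX yY); rewrite exy.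
Qed.

Lemma joined_card_nbhd k k' (R S : {set T}) :
  joined k k' -> k <= #|S| -> #|R| < #|S| + #|nbhd R S| + k'.
Proof.
move=> jn kS.
have small : #|R :\: (S :|: nbhd R S)| < k'.
  apply: (joined_nonadjacent jn _ kS) => [|x y xS].
    by rewrite disjoint_sym disjoints_subset; apply/subsetP=> z; rewrite !inE; case: (z \in S).
  rewrite !inE negb_or => /andP[/andP[yS yN] yR]; apply: contra yN => exy.
  by rewrite yR yS; apply/existsP; exists x; rewrite xS.
have : #|S :|: nbhd R S| <= #|S| + #|nbhd R S| := leq_card_setU _ _.
have := subset_leq_card (subsetIr R (S :|: nbhd R S)).
have := cardsID (S :|: nbhd R S) R.
lia.
Qed.

Lemma nbhd_setU (R S X : {set T}) :
  nbhd R (S :|: X) \subset nbhd R S :|: nbhd (R :\: S) X.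
Proof.
apply/subsetP=> v; rewrite !inE negb_or => /and3P[vR /andP[vS vX] /existsP[x]].
rewrite !inE => /andP[/orP[xS|xX] exv].
  by rewrite vR vS /=; apply/orP; left; apply/existsP; exists x; rewrite xS.
by rewrite vR vS vX /= orbC; apply/orP; left; apply/existsP; exists x; rewrite xX.
Qed.

Lemma joined_expanding_subset k k' (R : {set T}) :
  joined k k' -> 0 < k -> 10 * k + k' <= #|R| ->
  exists E : {set T}, [/\ E \subset R, #|R| < #|E| + k & expanding E k].
Proof.
move=> jn k_gt0 kR.
(* A largest sparse [S] is smaller than [k] by [joined_card_nbhd], and its
   maximality makes every small set expand in [R :\: S]. *)
pose sparse (S : {set T}) := [&& S \subset R, #|S| < 2 * k & #|nbhd R S| <= 4 * #|S|].
have sparse0 : sparse set0.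
  apply/and3P; split; [exact: sub0set | by rewrite cards0; lia |].
  rewrite cards0 leqn0 cards_eq0; apply/eqP/setP=> v.
  by rewrite !inE; case: existsP => [[x]|]; rewrite ?inE ?andbF.
case: (arg_maxnP (fun S : {set T} => #|S|) sparse0) => S /and3P[SR S2k NS] maxS.
have Sk : #|S| < k by rewrite ltnNge; apply/negP=> /(joined_card_nbhd R jn); lia.
exists (R :\: S); split; [exact: subsetDl | by rewrite cardsDS //; lia |].
move=> X XRS /andP[X_gt0 Xk]; rewrite leqNgt; apply/negP=> NX.
have dSX : [disjoint S & X].
  by rewrite disjoint_sym disjoints_subset; apply: subset_trans XRS _; rewrite setDE subsetIr.
have cSX : #|S :|: X| = #|S| + #|X| by rewrite cardsU (disjoint_setI0 dSX) cards0 subn0.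
suff /maxS : sparse (S :|: X) by lia.
rewrite /sparse subUset SR (subset_trans XRS (subsetDl _ _)) cSX /=.
have N_sub := subset_leq_card (nbhd_setU R S X).
have N_setU : #|nbhd R S :|: nbhd (R :\: S) X| <= #|nbhd R S| + #|nbhd (R :\: S) X| :=
  leq_card_setU _ _.
by apply/andP; split; lia.
Qed.

Lemma joined_few_low_degree k k' (E X : {set T}) :
  joined k k' -> k + k' <= #|E| -> [disjoint X & E] ->
  (forall x, x \in X -> #|[set y in E | e x y]| <= 1) -> #|X| < k.
Proof.
move=> jn kE dXE low; rewrite ltnNge; apply/negP=> /subset_of_card[X' X'X cX'].
pose N := [set y in E | [exists x in X', e x y]].
pose g x := odflt x [pick y in [set y in E | e x y]].
have N_g : N \subset g @: X'.
  apply/subsetP=> y; rewrite inE => /andP[yE /exists_inP[x xX' exy]].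
  apply/imsetP; exists x => //; rewrite /g; case: pickP => [z zN | /(_ y)]; last first.
    by rewrite inE yE exy.
  have yN : y \in [set y in E | e x y] by rewrite inE yE exy.
  by move/card_le1_eqP: (low x (subsetP X'X x xX')) => /(_ y z yN zN).
have N_k : #|N| <= k.
  by rewrite -cX'; exact: leq_trans (subset_leq_card N_g) (leq_imset_card _ _).
have : #|E :\: N| < k'.
  apply: (joined_nonadjacent jn (disjointW X'X (subsetDl E N) dXE)) => [|x y xX'].
    by rewrite cX'.
  rewrite !inE => /andP[yN yE]; apply: contra yN => exy.
  by rewrite yE; apply/exists_inP; exists x.
have := cardsID N E; have := subset_leq_card (subsetIr E N); lia.
Qed.

Section DepthFirstSearch.

Hypothesis e_sym : symmetric e.
Variables (k k' : nat) (W : {set T}).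
Hypothesis jn : joined k k'.

(* [S] holds the finished vertices, [Q] the stack (a path, top first) and
   [U] the unvisited vertices; of the partition of [W] into these three parts
   only the cardinality bound is kept. *)
Definition dfs_state (S : {set T}) (Q : seq T) (U : {set T}) : Prop :=
  [/\ U \subset W, {subset Q <= W}, uniq Q & sorted e Q] /\
  [/\ [disjoint S & U], (forall x, x \in Q -> (x \notin S) && (x \notin U)),
      (forall x y, x \in S -> y \in U -> ~~ e x y), #|S| < k
    & #|W| <= #|S| + #|U| + size Q].

Lemma dfs_push S Q U t :
  dfs_state S Q U -> t \in U -> sorted e (t :: Q) -> dfs_state S (t :: Q) (U :\ t).
Proof.
move=> [[UW QW uQ _] [dSU QSU noE Sk cW]] tU sQ.
have tS : t \notin S by rewrite (disjointFl dSU tU).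
split; split=> //.
- exact: subset_trans (subsetDl _ _) UW.
- by move=> x /predU1P[-> | /QW //]; exact: (subsetP UW).
- by rewrite cons_uniq uQ andbT; apply/negP=> /QSU; rewrite tU andbF.
- exact: disjointWr (subsetDl _ _) dSU.
- move=> x /predU1P[-> | /QSU /andP[xS xU]]; first by rewrite !inE eqxx tS.
  by rewrite !inE xS (negbTE xU) andbF.
- by move=> x y xS /setD1P[_ yU]; exact: noE.
- by move: cW; rewrite (cardsD1 t U) tU /=; lia.
Qed.

Lemma dfs_pop S q Q U :
  dfs_state S (q :: Q) U -> (forall y, y \in U -> ~~ e q y) -> #|S|.+1 < k ->
  dfs_state (q |: S) Q U.
Proof.
move=> [[UW QW uQ sQ] [dSU QSU noE _ cW]] qU Sk1.
have /andP[qS qU'] := QSU q (mem_head q Q).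
move: uQ => /= /andP[qQ uQ].
split; split=> //.
- by move=> x xQ; apply: QW; rewrite inE xQ orbT.
- exact: path_sorted sQ.
- exact: disjoint_setU1.
- move=> x xQ; have /andP[xS ->] : (x \notin S) && (x \notin U).
    by apply: QSU; rewrite inE xQ orbT.
  by rewrite !inE negb_or xS !andbT; apply/eqP=> xq; move: qQ; rewrite -xq xQ.
- by move=> x y /setU1P[-> | xS] yU; [exact: qU | exact: noE].
- by rewrite cardsU1 qS.
- by move: cW; rewrite cardsU1 qS /=; lia.
Qed.

Lemma dfs_stuck S q Q U :
  dfs_state S (q :: Q) U -> (forall y, y \in U -> ~~ e q y) -> k <= #|S|.+1 ->
  #|W| < k + k' + size Q.
Proof.
move=> [[_ _ _ _] [dSU QSU noE Sk cW]] qU kS.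
have /andP[qS qU'] := QSU q (mem_head q Q).
have : #|U| < k'.
  apply: (joined_nonadjacent jn (disjoint_setU1 qU' dSU)); first by rewrite cardsU1 qS.
  by move=> x y /setU1P[-> | xS] yU; [exact: qU | exact: noE].
by move: cW => /=; lia.
Qed.

Lemma joined_dfs_path m :
  0 < k -> k + k' + m <= #|W| + 1 ->
  exists p : seq T, [/\ size p = m, uniq p, sorted e p & {subset p <= W}].
Proof.
move=> k_gt0 mW.
suff [p [mp up sp pW]] : exists p : seq T,
    [/\ m <= size p, uniq p, sorted e p & {subset p <= W}].
  exists (take m p); rewrite size_takel // take_uniq // take_sorted //.
  by split=> // x /mem_take; exact: pW.
suff dfs n S Q (U : {set T}) : 2 * #|U| + size Q < n -> dfs_state S Q U ->
    exists p : seq T, [/\ m <= size p, uniq p, sorted e p & {subset p <= W}].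
  apply: (dfs (2 * #|W|).+1 set0 [::] W); first by rewrite addn0.
  split; split=> //; rewrite ?cards0 ?addn0 //; last by move=> x y; rewrite inE.
  by rewrite -setI_eq0 set0I.
elim: n S Q U => // n IH S Q U pot st.
have [mQ | Qm] := leqP m (size Q).
  by case: st => -[_ QW uQ sQ] _; exists Q.
case: Q pot st Qm => [|q Q] pot st Qm.
  case: (set_0Vmem U) => [U0 | [t tU]].
    by case: st => _ [_ _ _ Sk]; rewrite U0 cards0 /=; lia.
  apply: (IH _ _ _ _ (dfs_push st tU _)) => //.
  by move: pot; rewrite (cardsD1 t U) tU /=; lia.
case: (boolP [exists t in U, e q t]) => [/exists_inP[t tU eqt] | /exists_inPn qU].
  apply: (IH _ _ _ _ (dfs_push st tU _)).
    by move: pot; rewrite (cardsD1 t U) tU /=; lia.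
  by case: st => -[_ _ _ sQ] _; rewrite /= e_sym eqt.
have [Sk | kS] := ltnP #|S|.+1 k.
  by apply: (IH _ _ _ _ (dfs_pop st qU Sk)); move: pot => /=; lia.
by have := dfs_stuck st qU kS; move: Qm => /=; lia.
Qed.

End DepthFirstSearch.

Definition path_in (U : {set T}) (r v : T) (j : nat) : Prop :=
  exists s : seq T, [/\ size s = j, path e r s, last r s = v, uniq s & {subset s <= U}].

Lemma path_in_sub (U U' : {set T}) r v j :
  U \subset U' -> path_in U r v j -> path_in U' r v j.
Proof.
by move=> UU' [s [ss ps ls us sU]]; exists s; split=> // x /sU; exact: (subsetP UU').
Qed.

Lemma path_in_rcons (U : {set T}) r u v j :
  path_in U r u j -> e u v -> v \notin U -> path_in (v |: U) r v j.+1.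
Proof.
move=> [s [ss ps ls us sU]] euv vU; exists (rcons s v); split.
- by rewrite size_rcons ss.
- by rewrite rcons_path ps ls euv.
- by rewrite last_rcons.
- by rewrite rcons_uniq us andbT; apply: contra vU => /sU.
- by move=> x; rewrite mem_rcons !inE => /predU1P[-> | /sU ->]; rewrite ?eqxx ?orbT.
Qed.

(* Layer [j] of a tree grown from [r] whose layers [1..j], the [i]-th of
   size [2 ^ i], make up [U]. *)
Definition fan (r : T) (U L : {set T}) (j : nat) : Prop :=
  [/\ L \subset U, #|L| = 2 ^ j, #|U| + 2 <= 2 ^ j.+1
    & forall v, v \in L -> path_in U r v j].

Lemma fan1 (E : {set T}) r :
  2 <= #|[set y in E | e r y]| -> exists2 L : {set T}, L \subset E & fan r L L 1.
Proof.
case/subset_of_card=> L LN cL; exists L.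
  by apply: subset_trans LN _; apply/subsetP=> y; rewrite inE => /andP[].
split; rewrite ?cL // => v vL; exists [:: v]; split=> //=.
- by move/subsetP: LN => /(_ v vL); rewrite inE => /andP[_ ->].
- by move=> x /predU1P[-> |].
Qed.

Lemma fan_step (E : {set T}) k r (U L : {set T}) j :
  expanding E k -> U \subset E -> fan r U L j -> #|L| < k ->
  exists U' L' : {set T}, U' \subset E /\ fan r U' L' j.+1.
Proof.
move=> expE UE [LU cL cU paths] Lk.
have NL : 4 * #|L| <= #|nbhd E L|.
  by apply: expE; [exact: subset_trans LU UE | rewrite Lk cL expn_gt0].
set C := nbhd E L :\: U.
have cC : 2 ^ j.+1 <= #|C|.
  have NU : nbhd E L :&: U \subset U :\: L.
    by apply/subsetP=> v; rewrite !inE => /andP[/and3P[_ -> _] ->].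
  have := subset_leq_card NU; rewrite cardsDS // cardsD.
  by rewrite expnS in cU *; lia.
have [L' L'C cL'] := subset_of_card cC.
have L'N : L' \subset nbhd E L := subset_trans L'C (subsetDl _ _).
have L'U v : v \in L' -> v \notin U by move/(subsetP L'C); rewrite inE => /andP[].
exists (U :|: L'), L'; split.
  by rewrite subUset UE; apply: subset_trans L'N _; apply/subsetP=> v; rewrite inE => /andP[].
split=> //; first exact: subsetUr.
  rewrite cardsU; suff -> : U :&: L' = set0 by rewrite cards0 subn0 cL' !expnS in cU *; lia.
  by apply/setP=> v; rewrite !inE; case vL': (v \in L'); rewrite ?andbF ?(negbTE (L'U v vL')).
move=> v vL'; have := subsetP L'N v vL'; rewrite inE => /and3P[_ _ /exists_inP[u uL euv]].
apply: path_in_sub (path_in_rcons (paths u uL) euv (L'U v vL')).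
by apply/subsetP=> x; rewrite !inE => /predU1P[-> | ->]; rewrite ?vL' ?orbT.
Qed.

Lemma funnel (E : {set T}) k r :
  1 < k -> expanding E k -> 2 <= #|[set y in E | e r y]| ->
  exists L : {set T}, [/\ k <= #|L|, L \subset E
    & forall v, v \in L -> path_in E r v (up_log 2 k)].
Proof.
move=> k_gt1 expE deg.
have layers j : 0 < j <= up_log 2 k -> exists U L : {set T}, U \subset E /\ fan r U L j.
  elim: j => [//|[|j] IH] /andP[_ jk].
    by have [L LE fanL] := fan1 deg; exists L, L.
  have [U [L [UE fanUL]]] := IH (ltnW jk).
  have [_ cL _ _] := fanUL; apply: fan_step expE UE fanUL _; rewrite cL.
  apply: leq_ltn_trans (up_log_gtn (isT : 1 < 2) k_gt1).
  by rewrite leq_exp2l //; lia.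
have [|U [L [UE [LU cL _ paths]]]] := layers (up_log 2 k).
  by rewrite up_log_gt0 k_gt1 /= leqnn.
exists L; split; first by rewrite cL; exact: up_logP.
  exact: subset_trans LU UE.
by move=> v /paths; exact: path_in_sub.
Qed.

Lemma funnel_root (E : {set T}) k r :
  0 < k -> expanding E k -> 2 <= #|[set y in E | e r y]| ->
  exists L : {set T}, [/\ k <= #|L|, L \subset r |: E
    & forall v, v \in L -> path_in E r v (up_log 2 k)].
Proof.
move=> k_gt0 expE deg; have [k1 | k_gt1] := leqP k 1.
  have -> : k = 1 by lia.
  exists [set r]; split; rewrite ?cards1 ?sub1set ?setU11 // => v /set1P ->.
  by exists [::].
have [L [kL LE paths]] := funnel k_gt1 expE deg.
by exists L; split=> //; exact: subset_trans LE (subsetU1 _ _).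
Qed.

Lemma joined_high_degree k k' (V E : {set T}) :
  joined k k' -> k + k' <= #|E| -> [disjoint V & E] ->
  #|V| < #|[set x in V | 1 < #|[set y in E | e x y]|]| + k.
Proof.
move=> jn kE dVE.
have low : #|[set x in V | #|[set y in E | e x y]| <= 1]| < k.
  apply: (joined_few_low_degree jn kE); last by move=> x; rewrite inE => /andP[].
  by apply: disjointWl dVE; apply/subsetP=> x; rewrite inE => /andP[].
suff: #|V| <= #|[set x in V | 1 < #|[set y in E | e x y]|]| +
               #|[set x in V | #|[set y in E | e x y]| <= 1]| by lia.
rewrite -(cardsID [set x | 1 < #|[set y in E | e x y]|] V) leq_add //.
  by apply: subset_leq_card; apply/subsetP=> x; rewrite !inE.
by apply: subset_leq_card; apply/subsetP=> x; rewrite !inE -leqNgt andbC.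
Qed.

Lemma joined_two_expanders a b :
  symmetric e -> joined a b -> 0 < a -> 0 < b -> 11 * a + 11 * b <= #|T| ->
  exists EA EB : {set T}, [/\ [disjoint EA & EB], expanding EA a, expanding EB b,
    a + b <= minn #|EA| #|EB| & #|T| <= #|~: (EA :|: EB)| + 11 * a + 11 * b].
Proof.
move=> e_sym jn a_gt0 b_gt0 abT.
have [RA _ cRA] := @subset_of_card [set: T] (10 * a + b) ltac:(rewrite cardsT; lia).
have [RB RBA cRB] := @subset_of_card (~: RA) (10 * b + a) ltac:(rewrite cardsCs setCK; lia).
have [EA [EAR cEA expA]] := joined_expanding_subset jn a_gt0 (eq_leq (esym cRA)).
have [EB [EBR cEB expB]] :=
  joined_expanding_subset (joined_sym e_sym jn) b_gt0 (eq_leq (esym cRB)).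
exists EA, EB; split=> //.
- by apply: disjointW EAR EBR _; rewrite disjoint_sym disjoints_subset.
- by rewrite leq_min; apply/andP; split; lia.
have : #|EA :|: EB| <= #|EA| + #|EB| := leq_card_setU _ _.
have := subset_leq_card EAR; have := subset_leq_card EBR.
have := cardsC (EA :|: EB); lia.
Qed.

Lemma joined_expanders_rich a b :
  symmetric e -> joined a b -> 0 < a -> 0 < b -> 11 * a + 11 * b <= #|T| ->
  exists EA EB W : {set T},
    [/\ [disjoint EA & EB], [disjoint W & EA :|: EB], expanding EA a, expanding EB b
      & #|T| + 2 <= #|W| + 13 * a + 11 * b] /\
    forall x, x \in W -> 1 < #|[set y in EA | e x y]| /\ 1 < #|[set y in EB | e x y]|.
Proof.
move=> e_sym jn a_gt0 b_gt0 abT.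
have [EA [EB [dAB expA expB cE cT]]] := joined_two_expanders e_sym jn a_gt0 b_gt0 abT.
move: cE; rewrite leq_min => /andP[cEA cEB].
set O := ~: (EA :|: EB) in cT *.
set WA := [set x in O | 1 < #|[set y in EA | e x y]|].
set W := [set x in WA | 1 < #|[set y in EB | e x y]|].
have cWA : #|O| < #|WA| + a.
  by apply: joined_high_degree jn cEA _; rewrite disjoints_subset setCS subsetUl.
have cW : #|WA| < #|W| + a.
  apply: joined_high_degree jn cEB _; rewrite disjoints_subset.
  by apply/subsetP=> x; rewrite !inE negb_or => /andP[/andP[]].
exists EA, EB, W; split; first split=> //.
- by rewrite disjoints_subset; apply/subsetP=> x; rewrite !inE => /andP[/andP[]].
- by lia.
by move=> x; rewrite !inE => /andP[/andP[_ ->] ->].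
Qed.

Lemma uniq_cat_disjoint (s1 s2 : seq T) (A B : {set T}) :
  uniq s1 -> uniq s2 -> {subset s1 <= A} -> {subset s2 <= B} -> [disjoint A & B] ->
  uniq (s1 ++ s2).
Proof.
move=> u1 u2 s1A s2B dAB; rewrite cat_uniq u1 u2 andbT /=.
by apply/hasPn=> x /s2B xB; apply/negP=> /s1A xA; rewrite (disjointFr dAB xA) in xB.
Qed.

Lemma cycle_cat_rev q p sA sB :
  symmetric e -> path e q p -> path e (last q p) sB -> path e q sA ->
  e (last (last q p) sB) (last q sA) -> cycle e ((q :: p) ++ sB ++ rev sA).
Proof.
move=> e_sym pp psB psA closing.
rewrite /= !rcons_cat -rev_cons cat_path pp cat_path psB /=.
rewrite (lastI q sA) rev_rcons /= closing rev_path.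
by rewrite (eq_path (e' := e)) // => x y; exact: e_sym.
Qed.

Lemma joined_cycle a b n :
  symmetric e -> joined a b -> 0 < a -> 1 < b ->
  up_log 2 a + up_log 2 b < n -> n <= b -> 33 * a + 49 * b <= #|T| ->
  exists c : seq T, [/\ size c = n, uniq c & cycle e c].
Proof.
move=> e_sym jn a_gt0 b_gt1 logn nb abT.
have [EA [EB [W [[dAB dWE expA expB cW] deg]]]] :=
  joined_expanders_rich e_sym jn a_gt0 (ltnW b_gt1) ltac:(lia).
have [|p [sp up pp pW]] := joined_dfs_path (W := W) (m := n - up_log 2 a - up_log 2 b)
  e_sym jn a_gt0; first by lia.
case: p sp up pp pW => [|q Q] sQ uQ pQ QW; first by move: sQ logn; clear; rewrite /=; lia.
have qW : q \in W := QW q (mem_head q Q).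
have [[degA _] [_ degB]] := (deg q qW, deg _ (QW _ (mem_last q Q))).
have [LA [cLA LAE pathsA]] := funnel_root a_gt0 expA degA.
have [LB [cLB LBE pathsB]] := funnel b_gt1 expB degB.
have qB : q \notin EB by apply: contraFN (disjointFr dWE qW) => qB; rewrite inE qB orbT.
have [v [w [vLA wLB evw]]] := jn LA LB (disjointW LAE LBE (disjoint_setU1 qB dAB)) cLA cLB.
have [sA [ssA psA lsA usA sAE]] := pathsA v vLA.
have [sB [ssB psB lsB usB sBE]] := pathsB w wLB.
exists ((q :: Q) ++ sB ++ rev sA); split.
- by move: sQ logn; rewrite /= !size_cat size_rev ssA ssB; clear; lia.
- apply: (uniq_cat_disjoint uQ _ QW _ dWE).
    apply: (uniq_cat_disjoint usB _ sBE (B := EA)); first by rewrite rev_uniq.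
      by move=> x; rewrite mem_rev => /sAE.
    by rewrite disjoint_sym.
  by move=> x; rewrite mem_cat mem_rev !inE => /orP[/sBE -> | /sAE ->]; rewrite ?orbT.
- by apply: cycle_cat_rev; rewrite ?lsA ?lsB // e_sym.
Qed.

Lemma seq_cycle_ordS n (c : seq T) :
  size c = n -> uniq c -> cycle e c ->
  exists v : 'I_n -> T, injective v /\ forall i : 'I_n, e (v i) (v (ordS i)).
Proof.
case: c => [<- _ _ | x p sc uc cyc].
  by exists (fun i : 'I_0 => False_rect _ (elimF idP (ltn0 i) (ltn_ord i))); split=> -[].
exists (fun i : 'I_n => nth x (x :: p) i); split.
  by move=> i j /eqP; rewrite nth_uniq ?sc ?ltn_ord // => /eqP/val_inj.
move=> i; move/pathP: cyc => /(_ x i); rewrite size_rcons.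
have ip : i < size (x :: p) by rewrite sc.
rewrite -rcons_cons !nth_rcons /= ip => /(_ isT).
have [i_lt | i_ge] := ltnP i (size p).
  by rewrite modn_small //; move: sc => /=; lia.
have -> : (i : nat) = size p by move: ip => /=; lia.
by rewrite eqxx -sc modnn.
Qed.

End Joined.

Lemma red_edge_sym N (c : 'I_N -> 'I_N -> bool) :
  symmetric_colouring c -> symmetric (red_edge c).
Proof. by move=> csym x y; rewrite /red_edge eq_sym csym. Qed.

Lemma joined_red_of_no_blue N (c : 'I_N -> 'I_N -> bool) a b :
  ~ has_blue_Kab c a b -> joined (red_edge c) a b.
Proof.
move=> noblue X Y dXY aX bY.
have [/exists_inP[x xX /exists_inP[y yY rxy]] | none] :=
  boolP [exists x in X, exists y in Y, red_edge c x y]; first by exists x, y.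
case: noblue.
have [X' X'X cX'] := subset_of_card aX; have [Y' Y'Y cY'] := subset_of_card bY.
exists X', Y'; split=> // [|x y xX' yY']; first exact: disjointW X'X Y'Y dXY.
have xX := subsetP X'X x xX'; have yY := subsetP Y'Y y yY'.
have xy : x != y by apply: contraTneq yY => <-; rewrite (disjointFr dXY xX).
rewrite /blue_edge xy; apply: contra none => cxy.
by apply/exists_inP; exists x => //; apply/exists_inP; exists y; rewrite // /red_edge xy.
Qed.

Theorem lemma2p7 (n m1 m2 : nat) :
  3 <= n -> 0 < m1 -> 0 < m2 ->
  n <= m2 -> clog2 m1 + clog2 m2 + 1 <= n ->
  ramsey_le n m1 m2 (33 * m1 + 49 * m2).
Proof.
move=> n_ge3 m1_gt0 _ n_le_m2 logn.
exists (33 * m1 + 49 * m2) => // c csym.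
have [blue | noblue] := classic (has_blue_Kab c m1 m2); [by right | left].
have [|||cyc [size_cyc uniq_cyc cycle_cyc]] :=
  joined_cycle (red_edge_sym csym) (joined_red_of_no_blue noblue) m1_gt0 _ _ n_le_m2.
- by lia.
- by rewrite addn1 in logn.
- by rewrite card_ord.
exact: seq_cycle_ordS size_cyc uniq_cyc cycle_cyc.
Qed.
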